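(* For $K=K(\delta)>0$, $L=L(\delta)>0$, define on the uniform one-dimensional grid of spacing $h$ the finite difference scheme \[ -F^{1D,e,\delta}[u]=A^{\delta,+}\left(\lvert u_x^h\rvert^+,-u_{xx}^h\right)+A^{\delta,-}\left(-\lvert u_x^h\rvert^-,-u_{xx}^h\right). \] Then $-F^{1D,e,\delta}$ is elliptic and consistent with $-F^{1D,\delta}$, where $F^{1D,\delta}[u]=A^\delta(u_x,u_{xx})$.
   Context: $A(p,q)=(p^2q)^{1/3}$ (real cube root); $A^\delta(p,q)=\operatorname{sgn}(q)\min(\lvert A(p,q)\rvert,K\lvert p\rvert,L\lvert q\rvert)$ with $\operatorname{sgn}(0)=0$; $A^{\delta,+}(p,q)=A^\delta(p^+,q^+)$, $A^{\delta,-}(p,q)=A^\delta(p^-,q^-)$ with $x^+=\max(x,0)$, $x^-=\min(x,0)$. For a grid function $u$: $D^-_xu(x)=\frac{u(x)-u(x-h)}h$, $-D^+_xu(x)=\frac{u(x)-u(x+h)}h$, $\lvert u_x^h\rvert^+=\max\{-D^+_xu,D^-_xu,0\}$, $-\lvert u_x^h\rvert^-=\min\{-D^+_xu,D^-_xu,0\}$, $u_{xx}^h(x)=\frac{u(x+h)-2u(x)+u(x-h)}{h^2}$. A finite difference operator $F^h[u](x)=F^h(x,u(x),u(x)-u(\cdot))$ is elliptic if $r\le s$, $v(\cdot)\le w(\cdot)$ imply $F^h(x,r,v(\cdot))\le F^h(x,s,w(\cdot))$; it is consistent with $F$ if $\lim_{h\to0,\,y\to x}F^h[\phi](y)=F[\phi](x)$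 for every smooth $\phi$. *)

From Stdlib Require Import Reals Lra.
From Coquelicot Require Import Coquelicot.
Open Scope R_scope.

Definition sgn (x : R) : R :=
  if Rlt_dec 0 x then 1 else if Rlt_dec x 0 then -1 else 0.

Definition cbrt (x : R) : R :=
  if Rlt_dec 0 x then Rpower x (1/3)
  else if Rlt_dec x 0 then - Rpower (- x) (1/3) else 0.

Definition pos (x : R) : R := Rmax x 0.
Definition neg (x : R) : R := Rmin x 0.

Definition A (p q : R) : R := cbrt (p ^ 2 * q).

Definition Adelta (K L p q : R) : R :=
  sgn q * Rmin (Rmin (Rabs (A p q)) (K * Rabs p)) (L * Rabs q).

Definition Adelta_plus (K L p q : R) : R := Adelta K L (pos p) (pos q).
Definition Adelta_minus (K L p q : R) : R := Adelta K L (neg p) (neg q).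

Definition Dminus (h : R) (u : R -> R) (x : R) : R := (u x - u (x - h)) / h.
Definition mDplus (h : R) (u : R -> R) (x : R) : R := (u x - u (x + h)) / h.
Definition abs_ux_plus (h : R) (u : R -> R) (x : R) : R :=
  Rmax (Rmax (mDplus h u x) (Dminus h u x)) 0.
(* m_abs_ux_minus = -|u_x^h|^- *)
Definition m_abs_ux_minus (h : R) (u : R -> R) (x : R) : R :=
  Rmin (Rmin (mDplus h u x) (Dminus h u x)) 0.
Definition uxx (h : R) (u : R -> R) (x : R) : R :=
  (u (x + h) - 2 * u x + u (x - h)) / h ^ 2.

Definition negFe (K L h : R) (u : R -> R) (x : R) : R :=
  Adelta_plus K L (abs_ux_plus h u x) (- uxx h u x)
  + Adelta_minus K L (m_abs_ux_minus h u x) (- uxx h u x).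

(* the scheme written as F^h(x, r, v(.)) where r = u(x), v = u(x) - u(.):
   the grid function with u(x) = r and u(y) = r - v(y) for y <> x. *)
Definition negFe_rv (K L h x r : R) (v : R -> R) : R :=
  negFe K L h (fun y => if Req_EM_T y x then r else r - v y) x.

Definition elliptic_scheme (Fh : R -> R -> R -> (R -> R) -> R) : Prop :=
  forall (h x r s : R) (v w : R -> R), 0 < h ->
    r <= s -> (forall k : Z, v (x + IZR k * h) <= w (x + IZR k * h)) ->
    Fh h x r v <= Fh h x s w.

Definition smooth (phi : R -> R) : Prop := forall (n : nat) (y : R), ex_derive_n phi n y.

Definition consistent (Fh : R -> (R -> R) -> R -> R) (F : (R -> R) -> R -> R) : Prop :=
  forall (phi : R -> R) (x : R), smooth phi ->
    filterlim (fun hy : R * R => Fh (fst hy) phi (snd hy))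
      (filter_prod (at_right 0) (locally x)) (locally (F phi x)).

Definition F1D (K L : R) (u : R -> R) (x : R) : R :=
  Adelta K L (Derive u x) (Derive_n u 2 x).

(* Ellipticity: the scheme depends on u only through the differences u(x) - u(x +- h) and is
   nondecreasing in them, because A^delta is nondecreasing in both arguments on the closed
   positive quadrant and A^{delta,-}(p, q) = - A^{delta,+}(-p, -q).
   Consistency: by the mean value theorem the one-sided differences tend to -phi' and phi' and
   the second difference to phi'' as h -> 0+ and y -> x.  A^delta is continuous (its sign jump
   at q = 0 is absorbed by |A^delta(p, q)| <= L |q|), and since A^delta is even in p and odd
   in q, A^{delta,+}(|phi'|, -phi'') + A^{delta,-}(-|phi'|, -phi'') = - A^delta(phi', phi''). *)

From Stdlib Require Import Reals Lra.
From Coquelicot Require Import Coquelicot.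
Open Scope R_scope.

Lemma pow3_lt s t : s < t -> s ^ 3 < t ^ 3.
Proof.
  intros Hst.
  assert (Hpos : 0 < (t + s / 2) ^ 2 + 3 / 4 * s ^ 2).
  { destruct (Req_dec s 0) as [-> | Hs]; [nra | pose proof (pow2_gt_0 s Hs); nra]. }
  replace (t ^ 3) with (s ^ 3 + (t - s) * ((t + s / 2) ^ 2 + 3 / 4 * s ^ 2)) by field.
  pose proof (Rmult_lt_0_compat (t - s) _ ltac:(lra) Hpos). lra.
Qed.

Lemma pow3_cbrt x : cbrt x ^ 3 = x.
Proof.
  assert (Hroot : forall y, 0 < y -> Rpower y (1 / 3) ^ 3 = y).
  { intros y Hy. rewrite <- Rpower_pow by apply exp_pos.
    rewrite Rpower_mult. replace (1 / 3 * INR 3) with 1 by (simpl; field).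
    apply Rpower_1, Hy. }
  unfold cbrt. destruct (Rlt_dec 0 x); [now apply Hroot|].
  destruct (Rlt_dec x 0); [|simpl; lra].
  replace ((- Rpower (- x) (1 / 3)) ^ 3) with (- Rpower (- x) (1 / 3) ^ 3) by ring.
  rewrite Hroot; lra.
Qed.

Lemma cbrt_lt x y : x < y -> cbrt x < cbrt y.
Proof.
  intros Hxy. destruct (Rlt_le_dec (cbrt x) (cbrt y)) as [|Hyx]; [easy|].
  destruct (Req_dec (cbrt y) (cbrt x)) as [E|].
  - rewrite <- (pow3_cbrt x), <- (pow3_cbrt y), E in Hxy; lra.
  - pose proof (pow3_lt (cbrt y) (cbrt x) ltac:(lra)). rewrite !pow3_cbrt in *; lra.
Qed.

Lemma cbrt_le x y : x <= y -> cbrt x <= cbrt y.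
Proof. intros [Hxy | ->]; [apply Rlt_le, cbrt_lt, Hxy | apply Rle_refl]. Qed.

Lemma cbrt_pow3 t : cbrt (t ^ 3) = t.
Proof.
  destruct (Rtotal_order (cbrt (t ^ 3)) t) as [H | [H | H]]; [|easy|];
    apply pow3_lt in H; rewrite pow3_cbrt in H; lra.
Qed.

Lemma cbrt_0 : cbrt 0 = 0.
Proof. unfold cbrt. destruct (Rlt_dec 0 0), (Rlt_dec 0 0); lra. Qed.

Lemma cbrt_opp x : cbrt (- x) = - cbrt x.
Proof.
  rewrite <- (pow3_cbrt x) at 1.
  replace (- cbrt x ^ 3) with ((- cbrt x) ^ 3) by ring.
  apply cbrt_pow3.
Qed.

Lemma cbrt_continuous x : continuous cbrt x.
Proof.
  apply filterlim_locally. intros eps.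
  pose proof (cond_pos eps) as Heps.
  assert (Hlo : (cbrt x - eps) ^ 3 < x) by (rewrite <- (pow3_cbrt x) at 2; apply pow3_lt; lra).
  assert (Hhi : x < (cbrt x + eps) ^ 3) by (rewrite <- (pow3_cbrt x) at 1; apply pow3_lt; lra).
  set (c := cbrt x) in *.
  assert (Hd : 0 < Rmin (x - (c - eps) ^ 3) ((c + eps) ^ 3 - x)) by (apply Rmin_pos; lra).
  exists (mkposreal _ Hd). intros y Hy.
  change (Rabs (y - x) < Rmin (x - (c - eps) ^ 3) ((c + eps) ^ 3 - x)) in Hy.
  change (Rabs (cbrt y - c) < eps).
  pose proof (Rmin_l (x - (c - eps) ^ 3) ((c + eps) ^ 3 - x)).
  pose proof (Rmin_r (x - (c - eps) ^ 3) ((c + eps) ^ 3 - x)).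
  apply Rabs_def2 in Hy as [Hy1 Hy2].
  assert (Hlo' : c - eps < cbrt y) by (rewrite <- (cbrt_pow3 (c - eps)); apply cbrt_lt; lra).
  assert (Hhi' : cbrt y < c + eps) by (rewrite <- (cbrt_pow3 (c + eps)); apply cbrt_lt; lra).
  apply Rabs_def1; lra.
Qed.

Section Limits.
Context {T : Type} {F : (T -> Prop) -> Prop} {FF : Filter F}.

Lemma filterlim_dominated (f g k : T -> R) (a b c : R) :
  filterlim f F (locally a) -> filterlim g F (locally b) ->
  (forall t, Rabs (k t - c) <= Rabs (f t - a) + Rabs (g t - b)) ->
  filterlim k F (locally c).
Proof.
  intros Hf Hg Hk. apply filterlim_locally. intros eps.
  assert (Heps : 0 < eps / 2) by (pose proof (cond_pos eps); lra).
  generalize (filter_and _ _ (proj1 (filterlim_locally _ _) Hf (mkposreal _ Heps))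
                             (proj1 (filterlim_locally _ _) Hg (mkposreal _ Heps))).
  apply filter_imp. intros t [Ht1 Ht2].
  change (Rabs (f t - a) < eps / 2) in Ht1. change (Rabs (g t - b) < eps / 2) in Ht2.
  change (Rabs (k t - c) < eps). specialize (Hk t). lra.
Qed.

Lemma lim_Rplus (f g : T -> R) (a b : R) :
  filterlim f F (locally a) -> filterlim g F (locally b) ->
  filterlim (fun t => f t + g t) F (locally (a + b)).
Proof.
  intros Hf Hg. exact (filterlim_comp_2 f g Rplus Hf Hg (@filterlim_plus _ R_NormedModule a b)).
Qed.

Lemma lim_Rmult (f g : T -> R) (a b : R) :
  filterlim f F (locally a) -> filterlim g F (locally b) ->
  filterlim (fun t => f t * g t) F (locally (a * b)).
Proof.
  intros Hf Hg. exact (filterlim_comp_2 f g Rmult Hf Hg (@filterlim_mult R_AbsRing a b)).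
Qed.

Lemma lim_Rabs (f : T -> R) (a : R) :
  filterlim f F (locally a) -> filterlim (fun t => Rabs (f t)) F (locally (Rabs a)).
Proof. intros Hf. exact (filterlim_comp _ _ _ f Rabs _ _ _ Hf (filterlim_Rabs a)). Qed.

Lemma lim_Rmin (f g : T -> R) (a b : R) :
  filterlim f F (locally a) -> filterlim g F (locally b) ->
  filterlim (fun t => Rmin (f t) (g t)) F (locally (Rmin a b)).
Proof.
  intros Hf Hg. apply (filterlim_dominated f g _ a b _ Hf Hg). intros t.
  unfold Rmin; destruct (Rle_dec (f t) (g t)), (Rle_dec a b);
    unfold Rabs; repeat destruct Rcase_abs; lra.
Qed.

Lemma lim_Rmax (f g : T -> R) (a b : R) :
  filterlim f F (locally a) -> filterlim g F (locally b) ->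
  filterlim (fun t => Rmax (f t) (g t)) F (locally (Rmax a b)).
Proof.
  intros Hf Hg. apply (filterlim_dominated f g _ a b _ Hf Hg). intros t.
  unfold Rmax; destruct (Rle_dec (f t) (g t)), (Rle_dec a b);
    unfold Rabs; repeat destruct Rcase_abs; lra.
Qed.

Lemma lim_pos (f : T -> R) (a : R) :
  filterlim f F (locally a) -> filterlim (fun t => pos (f t)) F (locally (pos a)).
Proof. intros Hf. apply lim_Rmax; [exact Hf | apply filterlim_const]. Qed.

Lemma lim_neg (f : T -> R) (a : R) :
  filterlim f F (locally a) -> filterlim (fun t => neg (f t)) F (locally (neg a)).
Proof. intros Hf. apply lim_Rmin; [exact Hf | apply filterlim_const]. Qed.

Lemma lim_cbrt (f : T -> R) (a : R) :
  filterlim f F (locally a) -> filterlim (fun t => cbrt (f t)) F (locally (cbrt a)).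
Proof. intros Hf. exact (filterlim_comp _ _ _ f cbrt _ _ _ Hf (cbrt_continuous a)). Qed.

Lemma sgn_eventually_const (g : T -> R) (b : R) :
  filterlim g F (locally b) -> b <> 0 -> F (fun t => sgn (g t) = sgn b).
Proof.
  intros Hg Hb. assert (Hr : 0 < Rabs b) by now apply Rabs_pos_lt.
  generalize (proj1 (filterlim_locally _ _) Hg (mkposreal _ Hr)). apply filter_imp.
  intros t Ht. change (Rabs (g t - b) < Rabs b) in Ht.
  unfold sgn, Rabs in *. repeat destruct Rcase_abs; repeat destruct Rlt_dec; lra.
Qed.

End Limits.

Lemma sgn_0 : sgn 0 = 0.
Proof. unfold sgn. destruct (Rlt_dec 0 0), (Rlt_dec 0 0); lra. Qed.

Lemma sgn_pos q : 0 < q -> sgn q = 1.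
Proof. intros Hq. unfold sgn. destruct (Rlt_dec 0 q); lra. Qed.

Lemma sgn_nonneg q : 0 <= q -> 0 <= sgn q.
Proof. intros [Hq | <-]; [rewrite sgn_pos | rewrite sgn_0]; lra. Qed.

Lemma sgn_opp q : sgn (- q) = - sgn q.
Proof. unfold sgn. repeat destruct Rlt_dec; lra. Qed.

Lemma Rabs_sgn_le q : Rabs (sgn q) <= 1.
Proof. unfold sgn. repeat destruct Rlt_dec; unfold Rabs; repeat destruct Rcase_abs; lra. Qed.

Lemma Rmin_le_compat a b c d : a <= c -> b <= d -> Rmin a b <= Rmin c d.
Proof.
  intros. eapply Rle_trans; [apply Rle_min_compat_r | apply Rle_min_compat_l]; eassumption.
Qed.

Section Adelta.
Variables K L : R.
Hypotheses (HK : 0 <= K) (HL : 0 <= L).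

Definition Adelta_mag (p q : R) : R :=
  Rmin (Rmin (Rabs (A p q)) (K * Rabs p)) (L * Rabs q).

Lemma Adelta_sgn_mag p q : Adelta K L p q = sgn q * Adelta_mag p q.
Proof. reflexivity. Qed.

Lemma Adelta_mag_nonneg p q : 0 <= Adelta_mag p q.
Proof.
  pose proof (Rabs_pos (A p q)). pose proof (Rabs_pos p). pose proof (Rabs_pos q).
  unfold Adelta_mag, Rmin. repeat destruct Rle_dec; nra.
Qed.

Lemma Rabs_Adelta_le p q : Rabs (Adelta K L p q) <= L * Rabs q.
Proof.
  rewrite Adelta_sgn_mag, Rabs_mult, (Rabs_pos_eq _ (Adelta_mag_nonneg p q)).
  apply Rle_trans with (1 * Adelta_mag p q).
  - apply Rmult_le_compat_r; [apply Adelta_mag_nonneg | apply Rabs_sgn_le].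
  - rewrite Rmult_1_l. apply Rmin_r.
Qed.

Lemma Adelta_0_r p : Adelta K L p 0 = 0.
Proof. rewrite Adelta_sgn_mag, sgn_0. ring. Qed.

Lemma Adelta_opp_l p q : Adelta K L (- p) q = Adelta K L p q.
Proof. unfold Adelta, A. now rewrite Rabs_Ropp, <- Rsqr_pow2, <- Rsqr_neg, Rsqr_pow2. Qed.

Lemma Adelta_opp_r p q : Adelta K L p (- q) = - Adelta K L p q.
Proof.
  unfold Adelta, A. rewrite Ropp_mult_distr_r_reverse, cbrt_opp, !Rabs_Ropp, sgn_opp. ring.
Qed.

Lemma Adelta_abs_l p q : Adelta K L (Rabs p) q = Adelta K L p q.
Proof. unfold Rabs. destruct Rcase_abs; [apply Adelta_opp_l | reflexivity]. Qed.

Lemma Adelta_nonneg p q : 0 <= q -> 0 <= Adelta K L p q.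
Proof.
  intros Hq. rewrite Adelta_sgn_mag.
  apply Rmult_le_pos; [apply sgn_nonneg, Hq | apply Adelta_mag_nonneg].
Qed.

Lemma Adelta_le_nonneg p q p' q' :
  0 <= p <= p' -> 0 <= q <= q' -> Adelta K L p q <= Adelta K L p' q'.
Proof.
  intros Hp [[Hq | <-] Hqq']; [|rewrite Adelta_0_r; apply Adelta_nonneg; lra].
  rewrite !Adelta_sgn_mag, !sgn_pos, !Rmult_1_l by lra.
  assert (HA : 0 <= A p q <= A p' q').
  { unfold A. rewrite <- cbrt_0. split; apply cbrt_le; [nra|].
    apply Rmult_le_compat; [nra | lra | apply pow_incr | ]; lra. }
  unfold Adelta_mag. rewrite !Rabs_pos_eq by lra.
  apply Rmin_le_compat; [apply Rmin_le_compat|]; nra.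
Qed.

Lemma Adelta_minus_opp p q : Adelta_minus K L p q = - Adelta_plus K L (- p) (- q).
Proof.
  assert (Hneg : forall x, neg x = - pos (- x))
    by (intros x; unfold neg, pos, Rmin, Rmax; repeat destruct Rle_dec; lra).
  unfold Adelta_minus, Adelta_plus. now rewrite !Hneg, Adelta_opp_l, Adelta_opp_r.
Qed.

Lemma Adelta_plus_le p q p' q' :
  p <= p' -> q <= q' -> Adelta_plus K L p q <= Adelta_plus K L p' q'.
Proof.
  intros Hp Hq. apply Adelta_le_nonneg; split;
    solve [apply Rmax_r | apply Rle_max_compat_r; assumption].
Qed.

Lemma Adelta_minus_le p q p' q' :
  p <= p' -> q <= q' -> Adelta_minus K L p q <= Adelta_minus K L p' q'.
Proof.
  intros Hp Hq. rewrite !Adelta_minus_opp.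
  apply Ropp_le_contravar, Adelta_plus_le; lra.
Qed.

(* Exactly one of [pos q] and [pos (- q)] is nonzero. *)
Lemma Adelta_plus_minus_abs p q :
  Adelta_plus K L (Rabs p) (- q) + Adelta_minus K L (- Rabs p) (- q) = - Adelta K L p q.
Proof.
  rewrite Adelta_minus_opp, Ropp_involutive, Ropp_involutive.
  unfold Adelta_plus, pos. rewrite (Rmax_left (Rabs p)), !Adelta_abs_l by apply Rabs_pos.
  destruct (Rle_dec 0 q).
  - rewrite (Rmax_right (- q)), (Rmax_left q), Adelta_0_r by lra. ring.
  - rewrite (Rmax_left (- q)), (Rmax_right q), Adelta_0_r, Adelta_opp_r by lra. ring.
Qed.

Section Continuity.
Context {T : Type} {F : (T -> Prop) -> Prop} {FF : Filter F}.

Lemma lim_Adelta_mag (f g : T -> R) (a b : R) :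
  filterlim f F (locally a) -> filterlim g F (locally b) ->
  filterlim (fun t => Adelta_mag (f t) (g t)) F (locally (Adelta_mag a b)).
Proof.
  intros Hf Hg. unfold Adelta_mag, A.
  apply lim_Rmin; [apply lim_Rmin|]; [apply lim_Rabs, lim_cbrt | |];
    repeat first [assumption | apply filterlim_const | apply lim_Rabs | apply lim_Rmult].
Qed.

Lemma lim_Adelta (f g : T -> R) (a b : R) :
  filterlim f F (locally a) -> filterlim g F (locally b) ->
  filterlim (fun t => Adelta K L (f t) (g t)) F (locally (Adelta K L a b)).
Proof.
  intros Hf Hg. destruct (Req_dec b 0) as [-> | Hb].
  - rewrite Adelta_0_r.
    assert (HLg : filterlim (fun t => L * g t) F (locally (L * 0)))
      by (apply lim_Rmult; [apply filterlim_const | assumption]).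
    apply (filterlim_dominated _ _ _ _ _ _ HLg HLg). intros t.
    rewrite Rmult_0_r, !Rminus_0_r, Rabs_mult, (Rabs_pos_eq L HL).
    pose proof (Rabs_Adelta_le (f t) (g t)).
    pose proof (Rmult_le_pos L (Rabs (g t)) HL (Rabs_pos _)). lra.
  - rewrite Adelta_sgn_mag.
    apply (filterlim_ext_loc (fun t => sgn b * Adelta_mag (f t) (g t))).
    + generalize (sgn_eventually_const g b Hg Hb). apply filter_imp.
      intros t Ht. now rewrite Adelta_sgn_mag, Ht.
    + apply lim_Rmult; [apply filterlim_const | apply lim_Adelta_mag; assumption].
Qed.

End Continuity.

End Adelta.

Local Notation mesh_to x := (filter_prod (at_right 0) (locally x)).

Lemma filterlim_mean_value (g : R -> R) (x : R) (D : R -> R -> R) :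
  continuous g x ->
  (forall h y, 0 < h -> exists c, Rabs (c - y) <= h /\ D h y = g c) ->
  filterlim (fun hy : R * R => D (fst hy) (snd hy)) (mesh_to x) (locally (g x)).
Proof.
  intros Hg HD. apply filterlim_locally. intros eps.
  destruct (proj1 (filterlim_locally _ _) Hg eps) as [d Hd].
  assert (Hd2 : 0 < d / 2) by (pose proof (cond_pos d); lra).
  apply (Filter_prod _ _ _ (fun h => 0 < h < d / 2) (fun y => Rabs (y - x) < d / 2)).
  - exists (mkposreal _ Hd2). intros h Hh Hh0. change (Rabs (h - 0) < d / 2) in Hh.
    apply Rabs_def2 in Hh. simpl. lra.
  - exists (mkposreal _ Hd2). now intros y Hy.
  - intros h y [Hh Hhd] Hy. simpl. destruct (HD h y Hh) as [c [Hc ->]]. apply Hd.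
    change (Rabs (c - x) < d).
    replace (c - x) with ((c - y) + (y - x)) by ring.
    eapply Rle_lt_trans; [apply Rabs_triang | lra].
Qed.

Lemma MVT_is_derive (f f' : R -> R) a b :
  (forall y, is_derive f y (f' y)) -> a <= b ->
  exists c, a <= c <= b /\ f b - f a = f' c * (b - a).
Proof.
  intros Hf Hab. destruct (MVT_gen f a b f') as [c [Hc E]].
  - intros y _. apply Hf.
  - intros y _. apply continuity_pt_filterlim, (@ex_derive_continuous R_AbsRing R_NormedModule).
    exists (f' y). apply Hf.
  - exists c. now rewrite Rmin_left, Rmax_right in Hc by lra.
Qed.

Section Differences.
Variable phi : R -> R.
Hypothesis Hphi : forall y, ex_derive phi y.
Hypothesis Hphi' : forall y, ex_derive (Derive phi) y.

Lemma Dminus_mean_value h y :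
  0 < h -> exists c, Rabs (c - y) <= h /\ Dminus h phi y = Derive phi c.
Proof.
  intros Hh. destruct (MVT_is_derive phi (Derive phi) (y - h) y) as [c [Hc E]];
    [intros; apply Derive_correct, Hphi | lra |].
  exists c. split; [apply Rabs_le; lra|].
  unfold Dminus. rewrite E. field. lra.
Qed.

Lemma mDplus_mean_value h y :
  0 < h -> exists c, Rabs (c - y) <= h /\ mDplus h phi y = - Derive phi c.
Proof.
  intros Hh. destruct (MVT_is_derive phi (Derive phi) y (y + h)) as [c [Hc E]];
    [intros; apply Derive_correct, Hphi | lra |].
  exists c. split; [apply Rabs_le; lra|].
  unfold mDplus. replace (phi y - phi (y + h)) with (- (phi (y + h) - phi y)) by ring.
  rewrite E. field. lra.
Qed.

(* Mean value theorem for the increment [s |-> phi (s + h) - phi s], then for [Derive phi]. *)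
Lemma uxx_mean_value h y :
  0 < h -> exists c, Rabs (c - y) <= h /\ uxx h phi y = Derive_n phi 2 c.
Proof.
  intros Hh.
  destruct (MVT_is_derive (fun s => phi (s + h) - phi s)
              (fun s => Derive phi (s + h) - Derive phi s) (y - h) y) as [c1 [Hc1 E1]];
    [intros s; auto_derive; [now split; [|split] | now rewrite !Rmult_1_l] | lra |].
  destruct (MVT_is_derive (Derive phi) (Derive (Derive phi)) c1 (c1 + h)) as [c2 [Hc2 E2]];
    [intros; apply Derive_correct, Hphi' | lra |].
  exists c2. split; [apply Rabs_le; lra|].
  unfold uxx. replace (y - h + h) with y in E1 by ring.
  replace (phi (y + h) - 2 * phi y + phi (y - h))
    with (Derive (Derive phi) c2 * (c1 + h - c1) * (y - (y - h))) by (rewrite <- E2; lra).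
  change (Derive_n phi 2 c2) with (Derive (Derive phi) c2). field. lra.
Qed.

End Differences.

Section Consistency.
Variable phi : R -> R.
Hypothesis Hphi : smooth phi.
Variable x : R.

Let Hd1 y : ex_derive phi y := Hphi 1%nat y.
Let Hd2 y : ex_derive (Derive phi) y := Hphi 2%nat y.
Let Hd3 y : ex_derive (Derive (Derive phi)) y := Hphi 3%nat y.

Lemma lim_Dminus :
  filterlim (fun hy : R * R => Dminus (fst hy) phi (snd hy)) (mesh_to x)
    (locally (Derive phi x)).
Proof.
  apply (filterlim_mean_value _ x (fun h => Dminus h phi)); [|exact (Dminus_mean_value phi Hd1)].
  exact (@ex_derive_continuous R_AbsRing R_NormedModule _ _ (Hd2 x)).
Qed.

Lemma lim_mDplus :
  filterlim (fun hy : R * R => mDplus (fst hy) phi (snd hy)) (mesh_to x)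
    (locally (- Derive phi x)).
Proof.
  apply (filterlim_mean_value (fun c => - Derive phi c) x (fun h => mDplus h phi));
    [|exact (mDplus_mean_value phi Hd1)].
  apply (continuous_opp (Derive phi)), (@ex_derive_continuous R_AbsRing R_NormedModule), Hd2.
Qed.

Lemma lim_opp_uxx :
  filterlim (fun hy : R * R => - uxx (fst hy) phi (snd hy)) (mesh_to x)
    (locally (- Derive_n phi 2 x)).
Proof.
  apply (filterlim_mean_value (fun c => - Derive_n phi 2 c) x (fun h y => - uxx h phi y)).
  - apply (continuous_opp (Derive (Derive phi))).
    apply (@ex_derive_continuous R_AbsRing R_NormedModule), Hd3.
  - intros h y Hh. destruct (uxx_mean_value phi Hd1 Hd2 h y Hh) as [c [Hc E]].
    exists c. now rewrite E.
Qed.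

Lemma lim_abs_ux_plus :
  filterlim (fun hy : R * R => abs_ux_plus (fst hy) phi (snd hy)) (mesh_to x)
    (locally (Rabs (Derive phi x))).
Proof.
  replace (Rabs (Derive phi x)) with (Rmax (Rmax (- Derive phi x) (Derive phi x)) 0)
    by (unfold Rmax, Rabs; repeat destruct Rle_dec; destruct Rcase_abs; lra).
  apply lim_Rmax; [apply lim_Rmax; [exact lim_mDplus | exact lim_Dminus] | apply filterlim_const].
Qed.

Lemma lim_m_abs_ux_minus :
  filterlim (fun hy : R * R => m_abs_ux_minus (fst hy) phi (snd hy)) (mesh_to x)
    (locally (- Rabs (Derive phi x))).
Proof.
  replace (- Rabs (Derive phi x)) with (Rmin (Rmin (- Derive phi x) (Derive phi x)) 0)
    by (unfold Rmin, Rabs; repeat destruct Rle_dec; destruct Rcase_abs; lra).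
  apply lim_Rmin; [apply lim_Rmin; [exact lim_mDplus | exact lim_Dminus] | apply filterlim_const].
Qed.

End Consistency.

Lemma negFe_consistent K L :
  0 <= K -> 0 <= L -> consistent (negFe K L) (fun u x => - F1D K L u x).
Proof.
  intros HK HL phi x Hphi. unfold negFe, F1D.
  rewrite <- Adelta_plus_minus_abs.
  apply lim_Rplus; apply (lim_Adelta K L HK HL).
  - apply lim_pos, lim_abs_ux_plus, Hphi.
  - apply lim_pos, lim_opp_uxx, Hphi.
  - apply lim_neg, lim_m_abs_ux_minus, Hphi.
  - apply lim_neg, lim_opp_uxx, Hphi.
Qed.

Definition negFe_diff (K L h a b : R) : R :=
  Adelta_plus K L (Rmax (Rmax (a / h) (b / h)) 0) ((a + b) / h ^ 2)
  + Adelta_minus K L (Rmin (Rmin (a / h) (b / h)) 0) ((a + b) / h ^ 2).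

Lemma negFe_eq_diff K L h u x :
  negFe K L h u x = negFe_diff K L h (u x - u (x + h)) (u x - u (x - h)).
Proof.
  unfold negFe, negFe_diff, abs_ux_plus, m_abs_ux_minus, mDplus, Dminus, uxx.
  replace (- ((u (x + h) - 2 * u x + u (x - h)) / h ^ 2))
    with ((u x - u (x + h) + (u x - u (x - h))) / h ^ 2) by (unfold Rdiv; ring).
  reflexivity.
Qed.

Lemma negFe_diff_le K L h a b a' b' :
  0 <= K -> 0 <= L -> 0 < h -> a <= a' -> b <= b' ->
  negFe_diff K L h a b <= negFe_diff K L h a' b'.
Proof.
  intros HK HL Hh Ha Hb.
  assert (Hdiv : forall c c' k, 0 < k -> c <= c' -> c / k <= c' / k)
    by (intros; apply Rmult_le_compat_r; [apply Rlt_le, Rinv_0_lt_compat |]; assumption).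
  assert (Hh2 : 0 < h ^ 2) by (apply pow_lt, Hh).
  apply Rplus_le_compat; [apply Adelta_plus_le | apply Adelta_minus_le]; auto;
    [apply Rle_max_compat_r, Rmax_le_compat | | apply Rle_min_compat_r, Rmin_le_compat | ];
    auto; apply Hdiv; lra.
Qed.

Lemma negFe_rv_eq_diff K L h x r v :
  h <> 0 -> negFe_rv K L h x r v = negFe_diff K L h (v (x + h)) (v (x - h)).
Proof.
  intros Hh. unfold negFe_rv. rewrite negFe_eq_diff.
  destruct (Req_EM_T x x) as [_ | []]; [|reflexivity].
  destruct (Req_EM_T (x + h) x), (Req_EM_T (x - h) x); try lra.
  f_equal; ring.
Qed.

Lemma negFe_elliptic K L : 0 <= K -> 0 <= L -> elliptic_scheme (negFe_rv K L).
Proof.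
  intros HK HL h x r s v w Hh _ Hvw.
  rewrite !negFe_rv_eq_diff by lra.
  pose proof (Hvw 1%Z) as Hright. pose proof (Hvw (-1)%Z) as Hleft.
  replace (x + IZR 1 * h) with (x + h) in Hright by ring.
  replace (x + IZR (-1) * h) with (x - h) in Hleft by ring.
  now apply negFe_diff_le.
Qed.

Theorem mainTheorem7 (K L : R) (HK : 0 < K) (HL : 0 < L) :
  elliptic_scheme (negFe_rv K L)
  /\ consistent (negFe K L) (fun u x => - F1D K L u x).
Proof.
  split; [apply negFe_elliptic | apply negFe_consistent]; lra.
Qed.
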